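(* For integers $k\ge3$ and $n>k(k-1)$, $$\left(\frac nk\right)^k\left(1-e_k(n)\right)\le p(n,k)\le\left(\frac nk\right)^k,\qquad\text{where } e_k(n)=\frac{4}{27}\cdot\frac{k^3}{n^2}.$$
   Context: For integers $q>t>0$, $p(q,t)$ is the maximum of $\prod_{i=1}^t q_i$ over all partitions $q_1+\dots+q_t=q$ into nonnegative integers with each $q_i<q$ (this maximum is attained by an equitable partition, i.e. one with $|q_i-q_j|\le1$). *)

From mathcomp Require Import all_boot all_order all_algebra.
Set Implicit Arguments. Unset Strict Implicit. Unset Printing Implicit Defensive.

Definition pmax (q t : nat) : nat :=
  \max_(f : {ffun 'I_t -> 'I_q} | \sum_(i < t) (f i : nat) == q)
     \prod_(i < t) (f i : nat).

From mathcomp Require Import all_boot all_order all_algebra.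
Import Order.TTheory GRing.Theory Num.Theory.
From mathcomp Require Import lra ring zify.
Local Open Scope ring_scope.

(* Write n = q k + r with 0 <= r < k and m = k - r.  The upper bound is the
   AM-GM inequality.  For the lower bound, the equitable partition (r parts
   q + 1, m parts q) has product (n/k)^k (1 + m/n)^r (1 - r/n)^m, and with
   x = m/8n, y = -r/8n we have r x + m y = 0 and
   (1 + m/n)^r (1 - r/n)^m = (1 + 8x)^r (1 + 8y)^m.  Since (1 - u)^-8 agrees
   with 1 + 8u to first order, (1 - u)^8 (1 + 8u) = 1 - O(u^2), and the
   first-order factors (1 - x)^r (1 - y)^m are at most 1 by AM-GM (their mean
   is 1).  Bernoulli's inequality then leaves a deficit r O(x^2) + m O(y^2),
   which is at most 4/27 k^3/n^2 as soon as 7k <= 3n. *)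

Lemma big_ord_addn_lt (T : Type) (idx : T) (op : Monoid.law idx)
    (r m : nat) (F : bool -> T) :
  \big[op/idx]_(i < r + m) F (i < r)%N
    = op (\big[op/idx]_(i < r) F true) (\big[op/idx]_(i < m) F false).
Proof.
rewrite big_split_ord; congr (op _ _); apply: eq_bigr => i _.
  by rewrite /= ltn_ord.
by rewrite /= ltnNge leq_addr.
Qed.

Section RealInequalities.

Variable R : realFieldType.
Implicit Types (x y u a b e t : R) (r m : nat).

Lemma prod_ord_le_mean_pow k (E : 'I_k -> R) : (forall i, 0 <= E i) ->
  \prod_(i < k) E i <= ((\sum_(i < k) E i) / k%:R) ^+ k.
Proof.
move=> E_ge0; have := (leif_AGM (A := predT) (fun i _ => E_ge0 i)).1.
by rewrite /= cardT size_enum_ord.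
Qed.

Lemma expr_mul_le_mean_pow r m x y : 0 <= x -> 0 <= y ->
  x ^+ r * y ^+ m <= ((x *+ r + y *+ m) / (r + m)%:R) ^+ (r + m).
Proof.
move=> x_ge0 y_ge0; pose E (b : bool) := if b then x else y.
have := @prod_ord_le_mean_pow (r + m)%N (fun i => E (i < r)%N).
rewrite !big_ord_addn_lt !prodr_const !sumr_const !card_ord; apply=> i.
by rewrite /E; case: ifP.
Qed.

Lemma one_sub_le_mul x y a b : 0 <= x -> 0 <= y -> 0 <= a -> 0 <= b ->
  1 - a <= x -> 1 - b <= y -> 1 - (a + b) <= x * y.
Proof.
move=> x_ge0 y_ge0 a_ge0 b_ge0 x_ge y_ge.
have [a_le1 | a_gt1] := lerP a 1; last by nra.
have [b_le1 | b_gt1] := lerP b 1; last by nra.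
nra.
Qed.

Lemma one_sub_le_expr r x a : 0 <= x -> 0 <= a -> 1 - a <= x ->
  1 - r%:R * a <= x ^+ r.
Proof.
move=> x_ge0 a_ge0 x_ge; elim: r => [|r IHr]; first by rewrite mul0r subr0.
rewrite exprS -natr1 mulrDl mul1r [_ * a + a]addrC.
by apply: one_sub_le_mul; rewrite ?exprn_ge0 ?mulr_ge0.
Qed.

(* Since (1 - u)^-8 = 1 + 8u + O(u^2), tilt u = 1 - O(u^2); defect u is the
   cubic Taylor polynomial of 1 - tilt u with its quartic term enlarged to
   dominate the remainder on [-1/8, 1/8]. *)
Definition tilt u : R := (1 - u) ^+ 8 * (1 + 8 * u).
Definition defect u : R := u ^+ 2 * (36 - 168 * u + 1024 * u ^+ 2).

Lemma tilt_ge0 u : -1/8 <= u <= 1/8 -> 0 <= tilt u.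
Proof. by case/andP=> u_ge u_le; rewrite mulr_ge0 ?exprn_ge0 //; lra. Qed.

Lemma defect_ge0 u : 0 <= defect u.
Proof. by rewrite mulr_ge0 ?sqr_ge0 //; nra. Qed.

Lemma one_sub_defect_le_tilt u : -1/8 <= u <= 1/8 -> 1 - defect u <= tilt u.
Proof.
case/andP=> u_ge u_le; rewrite -subr_ge0.
have -> : tilt u - (1 - defect u) = u ^+ 4 *
    (646 + 504 * u - 420 * u ^+ 2 + 216 * u ^+ 3 - 63 * u ^+ 4 + 8 * u ^+ 5).
  by rewrite /tilt /defect; ring.
rewrite mulr_ge0 //; first by rewrite (_ : 4 = 2 * 2)%N // exprM sqr_ge0.
have u2_le : u ^+ 2 <= 1/64 by nra.
have u3_ge : -1/512 <= u ^+ 3 by nra.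
have u4_le : u ^+ 4 <= 1/4096 by nra.
have u5_ge : -1 <= u ^+ 5 by nra.
have u4_ge0 : 0 <= u ^+ 4 by nra.
lra.
Qed.

Lemma tilt_expr_mul_le r m x y : -1/8 <= x <= 1/8 -> -1/8 <= y <= 1/8 ->
  x *+ r + y *+ m = 0 ->
  tilt x ^+ r * tilt y ^+ m <= (1 + 8 * x) ^+ r * (1 + 8 * y) ^+ m.
Proof.
move=> /andP[x_ge x_le] /andP[y_ge y_le] balanced.
have first_order_le1 : (1 - x) ^+ r * (1 - y) ^+ m <= 1.
  apply: le_trans (expr_mul_le_mean_pow r m _ _ _ _) _; [lra | lra |].
  rewrite !mulrnBl addrACA -opprD balanced subr0 -natrD.
  by case: (r + m)%N => [|k]; rewrite ?expr0 // divff ?expr1n // pnatr_eq0.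
have -> : tilt x ^+ r * tilt y ^+ m
    = (1 + 8 * x) ^+ r * (1 + 8 * y) ^+ m * ((1 - x) ^+ r * (1 - y) ^+ m) ^+ 8.
  rewrite /tilt; move: (1 - x : R) (1 - y : R) (1 + 8 * x) (1 + 8 * y) => A B C D.
  rewrite (exprMn _ (A ^+ 8)) (exprMn _ (B ^+ 8)) (exprMn _ (A ^+ r)) -!exprM.
  by rewrite (mulnC r) (mulnC m) mulrACA mulrC.
apply: ler_piMr; first by rewrite mulr_ge0 ?exprn_ge0 //; lra.
by rewrite exprn_ile1 // mulr_ge0 ?exprn_ge0 //; lra.
Qed.

Lemma one_sub_defect_le_tilt_expr r m x y :
  -1/8 <= x <= 1/8 -> -1/8 <= y <= 1/8 ->
  1 - (r%:R * defect x + m%:R * defect y) <= tilt x ^+ r * tilt y ^+ m.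
Proof.
move=> x_in y_in.
apply: one_sub_le_mul;
  rewrite ?exprn_ge0 ?tilt_ge0 ?(mulr_ge0 (ler0n _ _)) ?defect_ge0 //;
  by apply: one_sub_le_expr; rewrite ?tilt_ge0 ?defect_ge0 ?one_sub_defect_le_tilt.
Qed.

Lemma defect_pair_normalized_le e t : 0 <= e <= 1 -> 0 <= t <= 3/7 ->
  (1 - e ^+ 2) * (972 + 567 * e * t + 108 * t ^+ 2 * (1 + 3 * e ^+ 2)) <= 1024.
Proof.
move=> /andP[e_ge0 e_le1] /andP[t_ge0 t_le].
have e2_le1 : 0 <= 1 - e ^+ 2 by nra.
have et_le : 567 * e * t <= 243 * e by nra.
have t2_le : 108 * t ^+ 2 <= 972/49 by nra.
have e2_ge0 : 0 <= 1 + 3 * e ^+ 2 by nra.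
have factor_le : 972 + 567 * e * t + 108 * t ^+ 2 * (1 + 3 * e ^+ 2)
                 <= 972 + 243 * e + 972/49 * (1 + 3 * e ^+ 2) by nra.
have : (1 - e ^+ 2) * (972 + 243 * e + 972/49 * (1 + 3 * e ^+ 2)) <= 1024 by nra.
nra.
Qed.

Lemma defect_pair_homogeneous_le (s d N : R) : 0 < s -> `|d| <= s -> 7 * s <= 3 * N ->
  (s ^+ 2 - d ^+ 2) * (972 * N ^+ 2 + 567 * d * N + 108 * (s ^+ 2 + 3 * d ^+ 2))
    <= 1024 * (s ^+ 2 * N ^+ 2).
Proof.
move=> s_gt0 d_le s_le; have N_gt0 : 0 < N by lra.
have d_ge0 := normr_ge0 d; rewrite -(real_normK (num_real d)).
have dN_le : 567 * d * N <= 567 * `|d| * N by have := ler_norm d; nra.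
apply: (le_trans (ler_wpM2l _ (_ : _ <= 972 * N ^+ 2 + 567 * `|d| * N
                                         + 108 * (s ^+ 2 + 3 * `|d| ^+ 2)))).
- by nra.
- by rewrite lerD2r lerD2l.
have -> : (s ^+ 2 - `|d| ^+ 2) *
    (972 * N ^+ 2 + 567 * `|d| * N + 108 * (s ^+ 2 + 3 * `|d| ^+ 2))
  = s ^+ 2 * N ^+ 2 * ((1 - (`|d| / s) ^+ 2) * (972 + 567 * (`|d| / s) * (s / N)
      + 108 * (s / N) ^+ 2 * (1 + 3 * (`|d| / s) ^+ 2))).
  by field; rewrite !gt_eqF.
rewrite mulrC ler_pM2r ?mulr_gt0 ?exprn_gt0 //.
apply: defect_pair_normalized_le; apply/andP; split.
- by rewrite divr_ge0 // ltW.
- by rewrite ler_pdivrMr // mul1r.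
- by rewrite divr_ge0 // ltW.
- by rewrite ler_pdivrMr //; lra.
Qed.

Lemma defect_sum_le r m (N : R) : (0 < r + m)%N -> 7 * (r + m)%:R <= 3 * N ->
  r%:R * defect (m%:R / (8 * N)) + m%:R * defect (- (r%:R / (8 * N)))
    <= 4%:R / 27%:R * ((r + m)%:R ^+ 3 / N ^+ 2).
Proof.
rewrite -(ltr0n R) natrD => s_gt0 s_le.
have N_gt0 : 0 < N by lra.
have d_le : `|r%:R - m%:R| <= r%:R + m%:R :> R.
  by rewrite ler_norml; have := ler0n R r; have := ler0n R m; lra.
pose t := 6912 * N ^+ 4.
have t_gt0 : 0 < t by rewrite mulr_gt0 ?exprn_gt0.
(* With s = r + m and d = r - m: 4 r m = s^2 - d^2, 4 (r^2 - r m + m^2) = s^2 + 3 d^2. *)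
have -> : r%:R * defect (m%:R / (8 * N)) + m%:R * defect (- (r%:R / (8 * N)))
  = (r%:R + m%:R) * (((r%:R + m%:R) ^+ 2 - (r%:R - m%:R) ^+ 2) *
      (972 * N ^+ 2 + 567 * (r%:R - m%:R) * N
       + 108 * ((r%:R + m%:R) ^+ 2 + 3 * (r%:R - m%:R) ^+ 2))) / t.
  by rewrite /t /defect; field; rewrite gt_eqF.
have -> : 4%:R / 27%:R * ((r%:R + m%:R) ^+ 3 / N ^+ 2)
  = (r%:R + m%:R) * (1024 * ((r%:R + m%:R) ^+ 2 * N ^+ 2)) / t :> R.
  by rewrite /t; field; rewrite gt_eqF.
rewrite ler_pM2r ?invr_gt0 // ler_pM2l //.
exact: defect_pair_homogeneous_le.
Qed.

Lemma equitable_defect_ge r m (N : R) : (0 < r + m)%N -> 7 * (r + m)%:R <= 3 * N ->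
  1 - 4%:R / 27%:R * ((r + m)%:R ^+ 3 / N ^+ 2)
    <= (1 + m%:R / N) ^+ r * (1 - r%:R / N) ^+ m.
Proof.
move=> s_gt0 s_le; have s_le' := s_le; rewrite natrD in s_le'.
have r_ge0 := ler0n R r; have m_ge0 := ler0n R m.
have N_gt0 : 0 < N by move: s_gt0; rewrite -(ltr0n R) natrD; lra.
have N8_neq0 : 8 * N != 0 by rewrite gt_eqF // mulr_gt0.
pose x := m%:R / (8 * N); pose y := - (r%:R / (8 * N)).
have x8 : x * (8 * N) = m%:R by rewrite /x divfK.
have y8 : y * (8 * N) = - r%:R by rewrite /y mulNr divfK.
have x_in : -1/8 <= x <= 1/8 by apply/andP; split; nra.
have y_in : -1/8 <= y <= 1/8 by apply/andP; split; nra.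
have balanced : x *+ r + y *+ m = 0 by rewrite -(mulr_natr x) -(mulr_natr y) /x /y; ring.
have -> : 1 + m%:R / N = 1 + 8 * x by rewrite /x; field; rewrite gt_eqF.
have -> : 1 - r%:R / N = 1 + 8 * y by rewrite /y; field; rewrite gt_eqF.
apply: le_trans (tilt_expr_mul_le _ _ _ _ x_in y_in balanced).
apply: le_trans (one_sub_defect_le_tilt_expr r m _ _ x_in y_in).
by rewrite lerD2l lerN2; exact: defect_sum_le.
Qed.

Lemma equitable_prod_eq (q N : R) r m : (0 < r + m)%N -> N != 0 ->
  N = q * (r + m)%:R + r%:R ->
  (q + 1) ^+ r * q ^+ m
    = (N / (r + m)%:R) ^+ (r + m) * ((1 + m%:R / N) ^+ r * (1 - r%:R / N) ^+ m).
Proof.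
move=> s_gt0 N_neq0 def_N; have s_neq0 : (r + m)%:R != 0 :> R by rewrite pnatr_eq0 -lt0n.
rewrite exprD mulrACA -!exprMn; subst N.
by congr (_ ^+ _ * _ ^+ _); field; rewrite -natrD N_neq0 s_neq0.
Qed.

End RealInequalities.

Lemma pmax_le_mean_pow (R : realFieldType) n k :
  (pmax n k)%:R <= (n%:R / k%:R) ^+ k :> R.
Proof.
rewrite /pmax; apply: (big_ind (fun p : nat => p%:R <= (n%:R / k%:R) ^+ k :> R)).
- by rewrite exprn_ge0 // divr_ge0.
- by move=> p p' ? ?; rewrite /maxn; case: ltnP.
move=> f /eqP sum_f; rewrite natr_prod.
have := @prod_ord_le_mean_pow R k (fun i => (f i : nat)%:R) (fun i => ler0n R _).
by rewrite -natr_sum sum_f.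
Qed.

Lemma equitable_le_pmax q r m : (q.+1 < q * (r + m) + r)%N ->
  (q.+1 ^ r * q ^ m <= pmax (q * (r + m) + r) (r + m))%N.
Proof.
set n := (q * (r + m) + r)%N => q1_lt.
pose part (b : bool) : 'I_n := if b then Ordinal q1_lt else Ordinal (ltnW q1_lt).
pose f : {ffun 'I_(r + m)%N -> 'I_n} := [ffun i : 'I_(r + m)%N => part (i < r)%N].
have fE i : (f i : nat) = part (i < r)%N by rewrite ffunE.
have split_f := @big_ord_addn_lt _ _ _ r m (fun b => nat_of_ord (part b)).
have sum_f : (\sum_(i < r + m) (f i : nat) == n)%N.
  rewrite (eq_bigr _ (fun i _ => fE i)) split_f !sum_nat_const !card_ord /=.
  by apply/eqP; rewrite /n; ring.
have prod_f : (\prod_(i < r + m) (f i : nat) = q.+1 ^ r * q ^ m)%N.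
  by rewrite (eq_bigr _ (fun i _ => fE i)) split_f !prod_nat_const !card_ord.
by rewrite -prod_f; exact: leq_bigmax_cond sum_f.
Qed.

Theorem lemma4p4 (R : realFieldType) (k n : nat) :
  (3 <= k)%N -> (k * (k - 1) < n)%N ->
  (n%:R / k%:R) ^+ k * (1 - (4%:R / 27%:R) * (k%:R ^+ 3 / n%:R ^+ 2))
    <= (pmax n k)%:R :> R
  /\ (pmax n k)%:R <= (n%:R / k%:R) ^+ k :> R.
Proof.
move=> k_ge3 n_gt; split; last exact: pmax_le_mean_pow.
have [m def_k] : exists m, k = (n %% k + m)%N.
  by exists (k - n %% k)%N; rewrite subnKC // ltnW // ltn_pmod //; lia.
move: (n %/ k)%N (n %% k)%N (divn_eq n k) def_k k_ge3 n_gt => q r -> -> k_ge3 n_gt.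
set N := (q * (r + m) + r)%N.
have s_gt0 : (0 < r + m)%N by lia.
have N_gt0 : (0 < N)%N by rewrite /N; nia.
have q_gt0 : (0 < q)%N by rewrite /N in n_gt *; nia.
apply: le_trans (_ : (q.+1 ^ r * q ^ m)%:R <= _); last first.
  by rewrite ler_nat equitable_le_pmax // /N; nia.
have N_neq0 : N%:R != 0 :> R by rewrite pnatr_eq0 -lt0n.
have N_eq : N%:R = q%:R * (r + m)%:R + r%:R :> R by rewrite /N natrD natrM.
rewrite natrM !natrX -[q.+1%:R]natr1 (@equitable_prod_eq R _ _ r m s_gt0 N_neq0 N_eq).
rewrite ler_wpM2l ?exprn_ge0 ?divr_ge0 // equitable_defect_ge //.
by rewrite -!natrM ler_nat /N; nia.
Qed.
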